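(* Let $P=\{x\in\mathbb{R}^n: Ax\ge b\}$ with rational data be full-dimensional and pointed, let $\mathcal{I}\subseteq\{1,\dots,n\}$, $P_I=\{x\in P: x_j\in\mathbb{Z}\ \forall j\in\mathcal{I}\}$, and let $c\in\mathbb{R}^n$. Let $\mathcal{T}$ be finite and $P^t=\{x\in P: D^tx\ge D^t_0\}$, $t\in\mathcal{T}$, be the terms of a disjunction with $P_I\subseteq P_D:=\operatorname{cl}\operatorname{conv}(\bigcup_t P^t)$. For each $t\in\mathcal{T}$, let $p^t$ be a basic optimal solution to $\min\{c^\top x: x\in P^t\}$ with an associated cobasis, let $C^t$ be the basis cone at $p^t$, with extreme rays $r^{t1},\dots,r^{tn}$. Then the simple point-ray collection $(\mathcal{P}^0,\mathcal{R}^0)$, where $\mathcal{P}^0=\{p^t: t\in\mathcal{T}\}$ and $\mathcal{R}^0=\{r^{tj}: t\in\mathcal{T}, j\in[n]\}$, is proper.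
   Context: A cobasis of the basic solution $p^t$ is a set of $n$ linearly independent inequalities from the system defining $P^t$ (those corresponding to nonbasic variables) that are tight at $p^t$; the basis cone $C^t$ is the intersection of these $n$ half-spaces, a cone with apex $p^t$ and $n$ extreme rays. For finite $\mathcal{P},\mathcal{R}\subset\mathbb{R}^n$, the point-ray linear program (PRLP) has feasible region $\{(\alpha,\beta): \alpha^\top p\ge\beta\ \forall p\in\mathcal{P},\ \alpha^\top r\ge 0\ \forall r\in\mathcal{R}\}$, and $(\mathcal{P},\mathcal{R})$ is proper if $\alpha^\top x\ge\beta$ is valid for $P_I$ whenever $(\alpha,\beta)$ is PRLP-feasible. It is assumed (implicitly, for the definition) that each $\min\{c^\top x: x\in P^t\}$ has a basic optimal solution. *)

From HB Require Import structures.
From mathcomp Require Import all_boot all_order all_algebra.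
From mathcomp Require Import all_classical all_reals all_analysis.
Set Implicit Arguments. Unset Strict Implicit. Unset Printing Implicit Defensive.
Import Order.TTheory GRing.Theory Num.Theory.
Import numFieldNormedType.Exports.
Local Open Scope classical_set_scope.
Local Open Scope ring_scope.

Section Defs.
Variable R : realType.

Definition dotv n (u v : 'cV[R]_n) : R := \sum_(i < n) u i 0 * v i 0.

Definition polyh m n (A : 'M[R]_(m, n)) (b : 'cV[R]_m) : set 'cV[R]_n :=
  [set x | forall i : 'I_m, b i 0 <= (A *m x) i 0].

Definition pointed n (S : set 'cV[R]_n) : Prop :=
  ~ exists x d, S x /\ d != 0 /\ forall l : R, S (x + l *: d).

Definition full_dim n (S : set 'cV[R]_n) : Prop := interior S !=set0.

Definition convhull n (S : set 'cV[R]_n) : set 'cV[R]_n :=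
  [set x | exists (N : nat) (lam : 'I_N -> R) (y : 'I_N -> 'cV[R]_n),
     (forall k, 0 <= lam k) /\ \sum_(k < N) lam k = 1 /\ (forall k, S (y k)) /\
     x = \sum_(k < N) lam k *: y k].

Definition mixed_int n (S : set 'cV[R]_n) (I : {set 'I_n}) : set 'cV[R]_n :=
  [set x | S x /\ forall j, j \in I -> x j 0 \is a Num.int].

Definition extreme_dir n (K : set 'cV[R]_n) (r : 'cV[R]_n) : Prop :=
  K r /\ r != 0 /\
  forall u v, K u -> K v -> r = u + v ->
    exists lu lv : R, 0 <= lu /\ 0 <= lv /\ u = lu *: r /\ v = lv *: r.

Definition proper_pr n (SI Pts Rys : set 'cV[R]_n) : Prop :=
  forall (alpha : 'cV[R]_n) (beta : R),
    (forall p, Pts p -> beta <= dotv alpha p) ->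
    (forall r, Rys r -> 0 <= dotv alpha r) ->
    forall x, SI x -> beta <= dotv alpha x.

End Defs.

(* Stacked constraint system of a disjunctive term P^t = {x : A x >= b, D x >= d0}. *)
Definition stack_mat (R : realType) m k n (A : 'M[R]_(m, n)) (D : 'M[R]_(k, n)) :
  'M[R]_(m + k, n) := col_mx A D.
Definition stack_rhs (R : realType) m k (b : 'cV[R]_m) (d0 : 'cV[R]_k) :
  'cV[R]_(m + k) := col_mx b d0.

From HB Require Import structures.
From mathcomp Require Import all_boot all_order all_algebra.
From mathcomp Require Import all_classical all_reals all_analysis.
Import Order.TTheory GRing.Theory Num.Theory.
Import numFieldNormedType.Exports.
Local Open Scope classical_set_scope.
Local Open Scope ring_scope.

(* The n cobasic inequalities are linearly
   independent, so C^t = {x : M x >= M p^t} for an invertible M, and C^t is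
   the translate by p^t of the simplicial cone {d : M d >= 0}, whose extreme
   rays are, up to positive scaling, the n columns of M^-1.  Hence n pairwise
   non-parallel extreme rays r^{t1}, ..., r^{tn} generate that cone, and an
   inequality valid for p^t and for all r^{tj} is valid on C^t, which contains
   P^t.  A valid inequality defines a closed convex set, so it is then valid
   on cl conv (U_t P^t), which contains P_I. *)

Section DotProduct.
Variables (R : realType) (n : nat).
Implicit Types (a x y : 'cV[R]_n) (beta : R).

Lemma dotvE a x : dotv a x = (a^T *m x) 0 0.
Proof. by rewrite /dotv mxE; apply: eq_bigr => i _; rewrite mxE. Qed.

Lemma dotvB a x y : dotv a (x - y) = dotv a x - dotv a y.
Proof. by rewrite /dotv -sumrB; apply: eq_bigr => i _; rewrite !mxE mulrBr. Qed.

Lemma dotvZ a l x : dotv a (l *: x) = l * dotv a x.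
Proof. by rewrite !dotvE -scalemxAr mxE. Qed.

Lemma dotv_sum a N (y : 'I_N -> 'cV[R]_n) :
  dotv a (\sum_(k < N) y k) = \sum_(k < N) dotv a (y k).
Proof. by rewrite dotvE mulmx_sumr summxE; apply: eq_bigr => k _; rewrite dotvE. Qed.

Lemma dotv_continuous a : continuous (dotv a).
Proof.
apply: (@continuous_big _ _ +%R 0 xpredT); first exact: add_continuous.
move=> i _ x; apply: (@continuousM _ _ (fun=> a i 0) (fun y : 'cV[R]_n => y i 0)).
  exact: cst_continuous.
exact: coord_continuous.
Qed.

Lemma closed_halfspace a beta : closed [set y | beta <= dotv a y].
Proof.
rewrite -[X in closed X]/(dotv a @^-1` [set z | beta <= z]).
by apply: preimage_closed; [move=> y _; exact: dotv_continuous | exact: closed_ge].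
Qed.

Lemma convhull_halfspace a beta (S : set 'cV[R]_n) :
  S `<=` [set y | beta <= dotv a y] ->
  convhull S `<=` [set y | beta <= dotv a y].
Proof.
move=> S_sub _ [N [lam [y [lam_ge0 [lam_sum1 [Sy ->]]]]]] /=.
rewrite dotv_sum -[beta]mul1r -lam_sum1 mulr_suml.
by apply: ler_sum => k _; rewrite dotvZ ler_wpM2l // S_sub.
Qed.

Lemma closure_convhull_halfspace a beta (S : set 'cV[R]_n) :
  S `<=` [set y | beta <= dotv a y] ->
  closure (convhull S) `<=` [set y | beta <= dotv a y].
Proof.
move=> /convhull_halfspace /closureS.
by have /closure_id <- := closed_halfspace a beta.
Qed.

End DotProduct.

Section SimplicialCone.
Context {R : realType} {n : nat} {M : 'M[R]_n}.
Hypothesis M_unit : M \in unitmx.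

Definition cone_gen (i : 'I_n) : 'cV[R]_n := invmx M *m delta_mx i 0.

Lemma M_cone_gen i : M *m cone_gen i = delta_mx i 0.
Proof. exact: mulKVmx. Qed.

Lemma cone_gen_decomp x : x = \sum_i (M *m x) i 0 *: cone_gen i.
Proof.
rewrite -{1}(mulKmx M_unit x) {1}(matrix_sum_delta (M *m x)) mulmx_sumr.
by apply: eq_bigr => i _; rewrite big_ord1 scalemxAr.
Qed.

Lemma extreme_dir_cone_gen d : extreme_dir (polyh M 0) d ->
  exists i, 0 < (M *m d) i 0 /\ d = (M *m d) i 0 *: cone_gen i.
Proof.
move=> [d_cone [d_neq0 d_ext]].
(* d splits as its i-th component u plus d - u, both in the cone; extremality
   makes u a multiple of d, and comparing i-th coordinates gives u = d. *)
have [y Md] : {y | M *m d = y} by exists (M *m d).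
rewrite Md; have y_ge0 j : 0 <= y j 0 by have := d_cone j; rewrite Md mxE.
have [i yi_neq0] : exists i, y i 0 != 0.
  apply/existsP; apply: contraR d_neq0 => /existsPn y0.
  have y_eq0 : y = 0.
    by apply/matrixP => j k; rewrite (ord1 k) [RHS]mxE; apply/eqP/negbNE.
  by rewrite -(mulKmx M_unit d) Md y_eq0 mulmx0.
set u := y i 0 *: cone_gen i.
have Mu : M *m u = y i 0 *: delta_mx i 0 by rewrite -scalemxAr M_cone_gen.
have u_cone : polyh M 0 u.
  by move=> j; rewrite Mu !mxE; apply: mulr_ge0.
have du_cone : polyh M 0 (d - u).
  move=> j; rewrite mulmxBr Mu Md !mxE eqxx andbT.
  by case: eqP => [->|_]; rewrite ?mulr1 ?subrr ?mulr0 ?subr0.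
have [l [_ [_ [_ [ud _]]]]] := d_ext u (d - u) u_cone du_cone (esym (subrKC u d)).
have l1 : l = 1.
  have := congr1 (fun z => (M *m z) i 0) ud.
  rewrite /= Mu -scalemxAr Md !mxE !eqxx mulr1 -[X in X = _]mul1r.
  by move=> /(mulIf yi_neq0) ->.
exists i; split; first by rewrite lt_def yi_neq0 y_ge0.
by rewrite -/u ud l1 scale1r.
Qed.

Lemma extreme_dirs_generate (rr : 'I_n -> 'cV[R]_n) :
  (forall j, extreme_dir (polyh M 0) (rr j)) ->
  (forall j j', j != j' -> ~ exists l : R, 0 < l /\ rr j = l *: rr j') ->
  forall i, exists j, exists2 l, 0 < l & cone_gen i = l *: rr j.
Proof.
move=> rr_ext rr_nonpar.
have [s rr_s] := fin_all_exists (fun j => extreme_dir_cone_gen _ (rr_ext j)).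
have s_inj : injective s.
  move=> j j' s_jj'; case: (eqVneq j j') => // /rr_nonpar[].
  have [a_gt0 rr_j] := rr_s j; have [b_gt0 rr_j'] := rr_s j'.
  set a := (M *m rr j) (s j) 0 in a_gt0 rr_j.
  set b := (M *m rr j') (s j') 0 in b_gt0 rr_j'.
  exists (a / b); split; first exact: divr_gt0.
  by rewrite [in RHS]rr_j' scalerA divfK ?gt_eqF // -s_jj' -rr_j.
have [s' _ s'_s] := injF_bij s_inj.
move=> i; exists (s' i); have [a_gt0 rr_i] := rr_s (s' i).
rewrite s'_s in a_gt0 rr_i.
exists ((M *m rr (s' i)) i 0)^-1; first by rewrite invr_gt0.
by rewrite {2}rr_i scalerA mulVf ?gt_eqF // scale1r.
Qed.

Lemma dotv_le_cone alpha q x :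
  (forall i, 0 <= dotv alpha (cone_gen i)) -> polyh M (M *m q) x ->
  dotv alpha q <= dotv alpha x.
Proof.
move=> alpha_gen qx; rewrite -subr_ge0 -dotvB (cone_gen_decomp (x - q)) dotv_sum.
apply: sumr_ge0 => i _; rewrite dotvZ mulr_ge0 //.
by have := qx i; rewrite -subr_ge0 mulmxBr !mxE.
Qed.

Lemma basis_cone_valid (rr : 'I_n -> 'cV[R]_n) q alpha beta :
  (forall j, extreme_dir (polyh M 0) (rr j)) ->
  (forall j j', j != j' -> ~ exists l : R, 0 < l /\ rr j = l *: rr j') ->
  beta <= dotv alpha q -> (forall j, 0 <= dotv alpha (rr j)) ->
  polyh M (M *m q) `<=` [set x | beta <= dotv alpha x].
Proof.
move=> rr_ext rr_nonpar beta_q alpha_rr x qx.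
apply: (le_trans beta_q); apply: dotv_le_cone qx => i.
have [j [l l_gt0 ->]] := extreme_dirs_generate _ rr_ext rr_nonpar i.
by rewrite dotvZ; exact: mulr_ge0 (ltW l_gt0) (alpha_rr j).
Qed.

End SimplicialCone.

Lemma polyh_col_mx (R : realType) m k n (A : 'M[R]_(m, n)) (D : 'M[R]_(k, n))
    b d x :
  polyh A b x -> polyh D d x -> polyh (col_mx A D) (col_mx b d) x.
Proof.
move=> Ax Dx i; rewrite mul_col_mx -(splitK i).
by case: (fintype.split i) => j /=; rewrite ?col_mxEu ?col_mxEd.
Qed.

Lemma polyh_rowsub (R : realType) m p n (f : 'I_p -> 'I_m) (A : 'M[R]_(m, n)) b :
  polyh A b `<=` polyh (rowsub f A) (rowsub f b).
Proof. by move=> x Ax i; rewrite mul_rowsub_mx [_ i 0]mxE [X in _ <= X]mxE. Qed.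

Theorem proposition1
  (R : realType) (m n : nat)
  (A : 'M[rat]_(m, n)) (b : 'cV[rat]_m)
  (I : {set 'I_n}) (c : 'cV[R]_n)
  (T : finType) (k : T -> nat)
  (D : forall t : T, 'M[R]_(k t, n)) (D0 : forall t : T, 'cV[R]_(k t))
  (p : T -> 'cV[R]_n)
  (cob : forall t : T, 'I_n -> 'I_(m + k t))
  (r : T -> 'I_n -> 'cV[R]_n) :
  let P := polyh (map_mx ratr A) (map_mx ratr b) in
  let PI := mixed_int P I in
  let Pt := fun t => P `&` polyh (D t) (D0 t) in
  let G := fun t => stack_mat (map_mx ratr A) (D t) in
  let g := fun t => stack_rhs (map_mx ratr b) (D0 t) in
  (* basis cone C^t at p^t : intersection of the n cobasic half-spaces *)
  let C := fun t => polyh (rowsub (cob t) (G t)) (rowsub (cob t) (g t)) in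
  (* its recession cone, whose extreme directions are the extreme rays of C^t *)
  let recC := fun t => polyh (rowsub (cob t) (G t)) 0 in
  full_dim P ->
  pointed P ->
  PI `<=` closure (convhull (\bigcup_t Pt t)) ->
  (* p^t is an optimal solution of min {c^T x : x in P^t} *)
  (forall t, Pt t (p t) /\ forall x, Pt t x -> dotv c (p t) <= dotv c x) ->
  (* cob t is a cobasis of p^t: n linearly independent constraints of the
     system defining P^t, tight at p^t *)
  (forall t, row_free (rowsub (cob t) (G t))) ->
  (forall t (i : 'I_n), (G t *m p t) (cob t i) 0 = g t (cob t i) 0) ->
  (* r^{t1}, ..., r^{tn} are the (n distinct) extreme rays of C^t *)
  (forall t j, extreme_dir (recC t) (r t j)) ->
  (forall t (j j' : 'I_n), j != j' ->
      ~ exists l : R, 0 < l /\ r t j = l *: r t j') ->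
  proper_pr PI [set p t | t in [set: T]]
               [set r tj.1 tj.2 | tj in [set: (T * 'I_n)%type]].
Proof.
move=> P PI Pt G g C recC _ _ PI_sub _ cob_free cob_tight ray_ext ray_nonpar.
move=> alpha beta valid_p valid_r x /PI_sub.
apply: closure_convhull_halfspace => y [t _ Pt_y].
set M := rowsub (cob t) (G t).
have C_E : C t = polyh M (M *m p t).
  congr polyh; apply/matrixP => i j.
  by rewrite (ord1 j) mul_rowsub_mx [LHS]mxE [RHS]mxE cob_tight.
have Pt_C : Pt t `<=` polyh M (M *m p t).
  by rewrite -C_E => z [Pz Dz]; apply/polyh_rowsub/polyh_col_mx.
have M_unit : M \in unitmx by rewrite -row_free_unit; apply: cob_free.
apply: (basis_cone_valid M_unit (r t) (p t) alpha beta (ray_ext t) (ray_nonpar t)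
  _ _ y (Pt_C _ Pt_y)).
- by apply: valid_p; exists t.
- by move=> j; apply: valid_r; exists (t, j).
Qed.
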